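(* Let $\mathcal{G}_{36}$ be the network described in the context, with nodes $(i,j)$, $1\le i\le 3$, $1\le j\le 6$. Consider the coloring $K$ of its nodes with five colors $a_0,a_1,a_2,b_1,b_2$ defined by: for $1\le j\le 3$, node $(i,j)$ has color $a_r$ where $r\equiv j-i \pmod 3$, $r\in\{0,1,2\}$; for $4\le j\le 6$, node $(i,j)$ has color $b_1$ if $j-3=i$ and color $b_2$ if $j-3\neq i$. Then $K$ is balanced, but $K$ is not an orbit coloring, i.e. there is no subgroup $\Sigma\subseteq \mathbb{S}_3\times\mathbb{S}_6$ whose orbits on the node set are exactly the color classes of $K$.
   Context: For integers $m,n\ge1$, the network $\mathcal{G}_{mn}$ has node set $\{(i,j):1\le i\le m,\ 1\le j\le n\}$ (an $m\times n$ array; $i$ indexes rows, $j$ columns), all nodes of the same type. For each ordered pair of distinct nodes $(c,d)$ there is exactly one arrow with head $c$ and tail $d$, whose type is: ''row'' if $c,d$ lie in the same row, ''column'' if they lie in the same column, ''diagonal'' otherwise; in addition each node has an internal arrow from itself to itself (a fourth type). The group $\mathbb{S}_m\times\mathbb{S}_n$ acts on the nodes by $(\sigma,\tau)\cdot(i,j)=(\sigma(i),\tau(j))$; these permutations preserve arrow types and form the symmetry group of $\mathcal{G}_{mn}$. A coloring is a map from nodes to a set of colors (colorings are identified if they induce the same partition of the nodes). A coloring is balanced if whenever nodes $c,d$ have the same color there is a bijection between the input arrows of $c$ and those of $d$ preserving arrow type and the color of the tail node; equivalently, for every arrow type and every color $k$, the number of input arrows of that type to $c$ with tail of color $k$ equals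 the corresponding number for $d$. For a subgroup $\Sigma$ of the symmetry group, the orbit coloring of $\Sigma$ is the coloring whose color classes are the $\Sigma$-orbits on nodes; a coloring is an orbit coloring if it equals the orbit coloring of some such subgroup. *)

From mathcomp Require Import all_boot all_order all_fingroup.
Set Implicit Arguments. Unset Strict Implicit. Unset Printing Implicit Defensive.

(* Nodes of G_{mn}: (i,j) with i : 'I_m (row), j : 'I_n (column); 0-indexed. *)
Definition node (m n : nat) : finType := ('I_m * 'I_n)%type.

Inductive arrow_type := RowA | ColA | DiagA | InternalA.
Definition arrow_type_eqb (a b : arrow_type) : bool :=
  match a, b with
  | RowA, RowA | ColA, ColA | DiagA, DiagA | InternalA, InternalA => true
  | _, _ => false end.

(* type of the unique arrow with head c and tail d (the internal arrow when c = d) *)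
Definition atype (m n : nat) (c d : node m n) : arrow_type :=
  if c == d then InternalA
  else if c.1 == d.1 then RowA
  else if c.2 == d.2 then ColA
  else DiagA.

Definition in_count (m n : nat) (C : eqType) (col : node m n -> C)
    (c : node m n) (t : arrow_type) (k : C) : nat :=
  #|[set d : node m n | arrow_type_eqb (atype c d) t && (col d == k)]|.

Definition balanced (m n : nat) (C : eqType) (col : node m n -> C) : Prop :=
  forall c d : node m n, col c = col d ->
    forall (t : arrow_type) (k : C), in_count col c t k = in_count col d t k.

Definition sym_act (m n : nat) (g : ({perm 'I_m} * {perm 'I_n})%type)
    (c : node m n) : node m n := (g.1 c.1, g.2 c.2).

Definition is_orbit_coloring (m n : nat) (C : eqType) (col : node m n -> C) : Prop :=
  exists Sigma : {group ({perm 'I_m} * {perm 'I_n})%type},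
    forall c d : node m n,
      col c = col d <-> exists2 g, g \in Sigma & sym_act g c = d.

(* The coloring K of G_36: colors a_0,a_1,a_2,b_1,b_2 encoded as 0,1,2,3,4.
   With 0-indexed (i,j): column j < 3 gets a_r, r = (j - i) mod 3;
   column j >= 3 gets b_1 if j - 3 = i, b_2 otherwise. *)
Definition K36 (c : node 3 6) : nat :=
  let i := nat_of_ord c.1 in let j := nat_of_ord c.2 in
  if j < 3 then (j + 3 - i) %% 3
  else if j - 3 == i then 3 else 4.

(* Balance is a finite count, decided by computation over the 18 nodes.
   K is not an orbit coloring: the group would contain a color-preserving
   symmetry g sending node (1,5) to (1,6), both b_2 (nodes are 1-indexed
   here, 0-indexed in the code).  Such a g fixes row 1, hence fixes column 2,
   the only a_1-column in row 1; sending column 5 to column 6, it must send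
   the b_1-node (2,5) to (3,6), i.e. row 2 to row 3.  Then the a_0-node (2,2)
   is sent to the a_2-node (3,2). *)
From mathcomp Require Import all_boot all_order all_fingroup.

Set Implicit Arguments.
Unset Strict Implicit.
Unset Printing Implicit Defensive.

(* Unlike [enum 'I_n] and [ord_enum n], which go through [insub] and hence the
   opaque [idP], this list evaluates under [vm_compute]. *)
Fixpoint ord_list (n : nat) : seq 'I_n :=
  if n is n'.+1 then ord0 :: map (lift ord0) (ord_list n') else [::].

Lemma ord_listE n : ord_list n = enum 'I_n.
Proof. by elim: n => [|n IHn] /=; rewrite ?enum_ord0 // enum_ordSl IHn. Qed.

Section Colorings.

Variables (m n : nat) (C : eqType) (col : node m n -> C).

Definition nodes : seq (node m n) :=
  [seq (i, j) | i <- ord_list m, j <- ord_list n].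

Lemma perm_enum_nodes : perm_eq (enum (node m n)) nodes.
Proof.
apply: uniq_perm; first exact: enum_uniq.
  by rewrite allpairs_uniq ?ord_listE ?enum_uniq // => -[? ?] [? ?].
by move=> [i j]; rewrite mem_enum; apply/esym/allpairsP; exists (i, j);
  rewrite !ord_listE !mem_enum.
Qed.

Definition in_count_seq (c : node m n) (t : arrow_type) (k : C) : nat :=
  count (fun d => arrow_type_eqb (atype c d) t && (col d == k)) nodes.

Lemma in_countE c t k : in_count col c t k = in_count_seq c t k.
Proof.
rewrite /in_count cardsE cardE /enum_mem size_filter -enumT.
rewrite (seq.permP perm_enum_nodes); apply: eq_count => x.
by rewrite !inE.
Qed.

Definition colors : seq C := undup (map col nodes).

Definition balancedb : bool :=
  all (fun c => all (fun d =>
    all (fun t =>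
      all (fun k => in_count_seq c t k == in_count_seq d t k) colors)
        [:: RowA; ColA; DiagA; InternalA])
    [seq d <- nodes | col d == col c]) nodes.

Lemma in_count_seq_notin c t k : k \notin colors -> in_count_seq c t k = 0.
Proof.
rewrite mem_undup => k_out; apply/eqP; rewrite -leqn0 leqNgt -has_count.
by apply/hasP => -[d d_in /andP[_ /eqP col_d]]; case/mapP: k_out; exists d.
Qed.

Lemma balancedbP : reflect (balanced col) balancedb.
Proof.
have nodes_full x : x \in nodes by rewrite -(perm_mem perm_enum_nodes) mem_enum.
apply: (iffP idP) => [bal c d col_cd t k | bal]; last first.
  apply/allP => c _; apply/allP => d.
  rewrite mem_filter => /andP[/eqP col_dc _].
  apply/and5P; split=> //; apply/allP => k _;
    by rewrite -!in_countE (bal _ _ (esym col_dc)).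
rewrite !in_countE.
have [k_in | k_out] := boolP (k \in colors); last first.
  by rewrite !in_count_seq_notin.
have d_in : d \in [seq e <- nodes | col e == col c].
  by rewrite mem_filter col_cd eqxx nodes_full.
move/allP/(_ c (nodes_full c))/allP/(_ d d_in)/and5P: bal.
case=> bal_R bal_C bal_D bal_I _.
by case: t; [move: bal_R | move: bal_C | move: bal_D | move: bal_I]
  => /allP/(_ k k_in)/eqP.
Qed.

Lemma orbit_coloring_invariant c d :
  is_orbit_coloring col -> col c = col d ->
  exists g, sym_act g c = d /\ forall x, col (sym_act g x) = col x.
Proof.
case=> Sigma orbitsE /orbitsE[g Sg gc]; exists g; split=> // x.
by apply/esym/orbitsE; exists g.
Qed.

End Colorings.

Lemma K36_balanced : balanced K36.
Proof. by apply/balancedbP; vm_compute. Qed.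

Lemma K36_not_orbit_coloring : ~ is_orbit_coloring K36.
Proof.
pose r0 : 'I_3 := Ordinal (isT : 0 < 3).
pose r1 : 'I_3 := Ordinal (isT : 1 < 3).
pose r2 : 'I_3 := Ordinal (isT : 2 < 3).
pose c1 : 'I_6 := Ordinal (isT : 1 < 6).
pose c4 : 'I_6 := Ordinal (isT : 4 < 6).
pose c5 : 'I_6 := Ordinal (isT : 5 < 6).
move=> /(@orbit_coloring_invariant _ _ _ _ (r0, c4) (r0, c5)).
case=> // -[s t] [[s_r0 t_c4] K_inv].
have s_r1 : s r1 = r2.
  have := K_inv (r1, c4); rewrite /sym_act /= t_c4.
  by case: (s r1) => -[|[|[|i]]] //= ? _; apply: val_inj.
have t_c1 : t c1 = c1.
  have := K_inv (r0, c1); rewrite /sym_act /= s_r0.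
  by case: (t c1) => -[|[|[|[|[|[|j]]]]]] //= ? _; apply: val_inj.
by have := K_inv (r1, c1); rewrite /sym_act /= s_r1 t_c1.
Qed.

Theorem mainTheorem1 : balanced K36 /\ ~ is_orbit_coloring K36.
Proof. exact: (conj K36_balanced K36_not_orbit_coloring). Qed.
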